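(* Let $\alpha$, $F_\alpha$ and $L_\alpha$ be as in the context. The jump transformation $F^*_\alpha$ of $F_\alpha$ with respect to $A_1$, defined by $F_\alpha^*(x):=F_\alpha^{\rho_\alpha(x)}(x)$ where $\rho_\alpha(x):=\inf\{n\ge0:F_\alpha^n(x)\in A_1\}+1$, coincides with $L_\alpha$ (on $\mathcal U\setminus\{0\}$, where $\rho_\alpha$ is finite).
   Context: Let $\mathcal U=[0,1]$. $\alpha=\{A_n:n\in\mathbb N\}$ is a countable partition of $\mathcal U$ (up to the point $0$) into left-open, right-closed intervals of positive length, ordered from right to left starting with $A_1$, accumulating only at $0$; $a_n$ is the length of $A_n$ and $t_n:=\sum_{k\ge n}a_k$, so $A_n=(t_{n+1},t_n]$. The $\alpha$-Farey map is $F_\alpha(x)=(1-x)/a_1$ on $A_1$, $F_\alpha(x)=a_{n-1}(x-t_{n+1})/a_n+t_n$ on $A_n$ ($n\ge2$), $F_\alpha(0)=0$. The $\alpha$-Lüroth map is $L_\alpha(x)=(t_n-x)/a_n$ on $A_n$, $L_\alpha(0)=0$. *)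

From Stdlib Require Import Reals Lra Lia Arith ClassicalEpsilon.
From Coquelicot Require Import Coquelicot.
Open Scope R_scope.

(* A partition alpha is given by the sequence of lengths a : nat -> R,
   indexed from 1 (a 0 is unused).  Conditions: a n > 0 for n >= 1 and
   sum_{n>=1} a n = 1, i.e. the A_n cover (0,1]. *)
Definition is_partition (a : nat -> R) : Prop :=
  (forall n, (1 <= n)%nat -> 0 < a n) /\ is_series (fun k => a (S k)) 1.

Definition tail (a : nat -> R) (n : nat) : R := Series (fun k => a (n + k)%nat).

Definition inA (a : nat -> R) (n : nat) (x : R) : Prop :=
  tail a (S n) < x <= tail a n.

Definition idx (a : nat -> R) (x : R) : nat :=
  epsilon (inhabits 0%nat) (fun n => (1 <= n)%nat /\ inA a n x).

Definition Farey (a : nat -> R) (x : R) : R :=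
  if Req_EM_T x 0 then 0 else
  let n := idx a x in
  if Nat.eqb n 1 then (1 - x) / a 1%nat
  else a (n - 1)%nat * (x - tail a (S n)) / a n + tail a n.

Definition Luroth (a : nat -> R) (x : R) : R :=
  if Req_EM_T x 0 then 0 else
  let n := idx a x in (tail a n - x) / a n.

Definition hitsA1 (a : nat -> R) (x : R) (m : nat) : Prop :=
  inA a 1 (Nat.iter m (Farey a) x).

Definition rho (a : nat -> R) (x : R) : nat :=
  S (epsilon (inhabits 0%nat)
       (fun m => hitsA1 a x m /\ forall k, (k < m)%nat -> ~ hitsA1 a x k)).

Definition Fstar (a : nat -> R) (x : R) : R := Nat.iter (rho a x) (Farey a) x.

From Stdlib Require Import Reals Lra Lia Arith ClassicalEpsilon.
From Coquelicot Require Import Coquelicot.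
Open Scope R_scope.

(* Write a point of A_m = (t_{m+1}, t_m] as t_{m+1} + r a_m with r in (0,1].
   For m >= 2, F_alpha maps A_m affinely onto A_{m-1} keeping r, and on A_1 it
   sends r to 1 - r.  So x in A_n reaches A_1 after exactly n - 1 steps, still
   with coordinate r, and one more step gives 1 - r = (t_n - x) / a_n = L_alpha(x). *)

Section Partition.
Variable a : nat -> R.
Hypothesis Ha : is_partition a.

Lemma ex_series_tail n : (1 <= n)%nat -> ex_series (fun k => a (n + k)%nat).
Proof.
  destruct Ha as [_ Hs]; induction n as [|n IHn]; intros Hn; [lia|].
  destruct n as [|n]; [now exists 1|].
  apply (ex_series_ext (fun k => a (S n + S k)%nat)); [intros; f_equal; lia|].
  apply (ex_series_incr_1 (fun k => a (S n + k)%nat)), IHn; lia.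
Qed.

Lemma tail_S n : (1 <= n)%nat -> tail a n = a n + tail a (S n).
Proof.
  intros Hn; unfold tail; rewrite Series_incr_1 by now apply ex_series_tail.
  rewrite Nat.add_0_r; f_equal; apply Series_ext; intros; f_equal; lia.
Qed.

Lemma tail_1 : tail a 1 = 1.
Proof. destruct Ha as [_ Hs]; now apply is_series_unique. Qed.

Lemma tail_ge0 n : (1 <= n)%nat -> 0 <= tail a n.
Proof.
  intros Hn; destruct Ha as [Hpos _]; unfold tail.
  assert (Hzero : Series (fun _ : nat => 0) = 0).
  { transitivity (0 * Series (fun _ : nat => 0)); [|ring].
    rewrite <- Series_scal_l; apply Series_ext; intros; ring. }
  rewrite <- Hzero; apply Series_le; [|now apply ex_series_tail].
  intros k; split; [lra | left; apply Hpos; lia].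
Qed.

Lemma tail_le m n : (1 <= m)%nat -> (m <= n)%nat -> tail a n <= tail a m.
Proof.
  intros Hm Hmn; induction Hmn as [|n Hmn IH]; [lra|].
  rewrite tail_S in IH by lia; pose proof (proj1 Ha n ltac:(lia)); lra.
Qed.

Lemma tail_SS n : tail a (S (S n)) = 1 - sum_n (fun k => a (S k)) n.
Proof.
  induction n as [|n IHn].
  - rewrite sum_O; pose proof (tail_S 1 (le_n _)); rewrite tail_1 in *; lra.
  - rewrite sum_Sn; unfold plus; simpl; pose proof (tail_S (S (S n)) ltac:(lia)); lra.
Qed.

Lemma tail_lt x : 0 < x -> exists N, (1 <= N)%nat /\ tail a N < x.
Proof.
  intros Hx; destruct Ha as [_ Hs].
  assert (Hlim : is_lim_seq (sum_n (fun k => a (S k))) 1) by exact Hs.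
  apply is_lim_seq_spec in Hlim; destruct (Hlim (mkposreal x Hx)) as [N HN].
  exists (S (S N)); split; [lia|]; rewrite tail_SS.
  specialize (HN N (le_n _)); simpl in HN; apply Rabs_def2 in HN; lra.
Qed.

Lemma inA_exists x : 0 < x <= 1 -> exists n, (1 <= n)%nat /\ inA a n x.
Proof.
  intros Hx; destruct (tail_lt x ltac:(lra)) as [N [HN Hlt]].
  induction N as [|N IHN]; [lia|].
  destruct N as [|N]; [rewrite tail_1 in Hlt; lra|].
  destruct (Rle_lt_dec x (tail a (S N))) as [Hle|Hgt].
  - exists (S N); split; [lia | now split].
  - apply IHN; auto; lia.
Qed.

Lemma inA_inj m n x : (1 <= m)%nat -> (1 <= n)%nat -> inA a m x -> inA a n x -> m = n.
Proof.
  unfold inA; intros Hm Hn Hxm Hxn.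
  destruct (lt_eq_lt_dec m n) as [[Hlt|Heq]|Hlt]; auto.
  - pose proof (tail_le (S m) n ltac:(lia) ltac:(lia)); lra.
  - pose proof (tail_le (S n) m ltac:(lia) ltac:(lia)); lra.
Qed.

Lemma idx_inA n x : (1 <= n)%nat -> inA a n x -> idx a x = n.
Proof.
  intros Hn Hx; unfold idx.
  destruct (epsilon_spec (inhabits 0%nat) (fun n => (1 <= n)%nat /\ inA a n x))
    as [H1 H2]; [now exists n|].
  eapply inA_inj; eauto.
Qed.

Definition point (m : nat) (r : R) : R := tail a (S m) + r * a m.

Lemma inA_point m r : (1 <= m)%nat -> 0 < r <= 1 -> inA a m (point m r).
Proof.
  intros Hm Hr; pose proof (proj1 Ha m Hm).
  unfold inA, point; rewrite (tail_S m Hm); split; nra.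
Qed.

Lemma inA_point_coord n x : (1 <= n)%nat -> inA a n x ->
  exists r, 0 < r <= 1 /\ x = point n r.
Proof.
  unfold inA, point; intros Hn Hx; pose proof (proj1 Ha n Hn).
  rewrite (tail_S n Hn) in Hx.
  exists ((x - tail a (S n)) / a n); split; [split|field; lra].
  - apply Rdiv_lt_0_compat; lra.
  - apply Rmult_le_reg_r with (a n); [lra|]; field_simplify; lra.
Qed.

Lemma point_neq0 m r : (1 <= m)%nat -> 0 < r -> point m r <> 0.
Proof.
  intros Hm Hr; pose proof (tail_ge0 (S m) ltac:(lia)); pose proof (proj1 Ha m Hm).
  unfold point; nra.
Qed.

Lemma Farey_point m r : (2 <= m)%nat -> 0 < r <= 1 -> Farey a (point m r) = point (m - 1) r.
Proof.
  intros Hm Hr; pose proof (proj1 Ha m ltac:(lia)).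
  unfold Farey; destruct (Req_EM_T _ 0) as [Hzero|_];
    [exfalso; revert Hzero; apply point_neq0; lia || lra|].
  rewrite (idx_inA m) by (lia || (apply inA_point; auto; lia)).
  destruct (Nat.eqb_spec m 1) as [|_]; [lia|].
  unfold point; replace (S (m - 1)) with m by lia; field; lra.
Qed.

Lemma Farey_point1 r : 0 < r <= 1 -> Farey a (point 1 r) = 1 - r.
Proof.
  intros Hr; pose proof (proj1 Ha 1%nat (le_n _)) as Ha1.
  pose proof (tail_S 1 (le_n _)) as Htail1.
  unfold Farey; destruct (Req_EM_T _ 0) as [Hzero|_];
    [exfalso; revert Hzero; apply point_neq0; lia || lra|].
  rewrite (idx_inA 1) by (lia || now apply inA_point); simpl.
  unfold point; rewrite tail_1 in Htail1.
  replace (tail a 2) with (1 - a 1%nat) by lra; field; lra.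
Qed.

Lemma Farey_iter_point j m r : (1 <= m)%nat -> 0 < r <= 1 ->
  Nat.iter j (Farey a) (point (m + j) r) = point m r.
Proof.
  revert m; induction j as [|j IHj]; intros m Hm Hr; [now rewrite Nat.add_0_r|].
  replace (m + S j)%nat with (S m + j)%nat by lia; rewrite Nat.iter_succ.
  rewrite IHj, Farey_point by (lia || auto); now rewrite Nat.sub_1_r.
Qed.

Lemma Luroth_point n r : (1 <= n)%nat -> 0 < r <= 1 -> Luroth a (point n r) = 1 - r.
Proof.
  intros Hn Hr; pose proof (proj1 Ha n Hn).
  unfold Luroth; destruct (Req_EM_T _ 0) as [Hzero|_];
    [exfalso; revert Hzero; apply point_neq0; lia || lra|].
  rewrite (idx_inA n) by (auto; now apply inA_point).
  unfold point; rewrite (tail_S n Hn); field; lra.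
Qed.

End Partition.

Lemma rho_first_hit a x m :
  hitsA1 a x m -> (forall k, (k < m)%nat -> ~ hitsA1 a x k) -> rho a x = S m.
Proof.
  intros Hm Hbefore; unfold rho; f_equal.
  set (P := fun m => hitsA1 a x m /\ forall k, (k < m)%nat -> ~ hitsA1 a x k).
  destruct (epsilon_spec (inhabits 0%nat) P) as [He Hbefore_e]; [now exists m|].
  destruct (lt_eq_lt_dec (epsilon (inhabits 0%nat) P) m) as [[Hlt|Heq]|Hlt].
  - now exfalso; apply (Hbefore _ Hlt).
  - exact Heq.
  - now exfalso; apply (Hbefore_e _ Hlt).
Qed.

Theorem lemma2p1 (a : nat -> R) (Ha : is_partition a) (x : R) :
  0 < x <= 1 ->
  (exists m : nat, hitsA1 a x m) /\ Fstar a x = Luroth a x.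
Proof.
  intros Hx.
  destruct (inA_exists a Ha x Hx) as [n [Hn HxA]].
  destruct (inA_point_coord a Ha n x Hn HxA) as [r [Hr ->]].
  assert (Horbit : forall k, (k < n)%nat ->
            Nat.iter k (Farey a) (point a n r) = point a (n - k) r).
  { intros k Hk; replace n with (n - k + k)%nat at 1 by lia.
    apply Farey_iter_point; auto; lia. }
  assert (Hhit : hitsA1 a (point a n r) (n - 1)).
  { unfold hitsA1; rewrite Horbit by lia.
    replace (n - (n - 1))%nat with 1%nat by lia; now apply inA_point. }
  assert (Hmiss : forall k, (k < n - 1)%nat -> ~ hitsA1 a (point a n r) k).
  { intros k Hk Hk1; unfold hitsA1 in Hk1; rewrite Horbit in Hk1 by lia.
    pose proof (inA_inj a Ha 1 (n - k) _ (le_n _) ltac:(lia) Hk1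
                  (inA_point a Ha (n - k) r ltac:(lia) Hr)); lia. }
  split; [now exists (n - 1)%nat|].
  unfold Fstar; rewrite (rho_first_hit _ _ _ Hhit Hmiss), Luroth_point by auto.
  simpl; rewrite Horbit by lia.
  replace (n - (n - 1))%nat with 1%nat by lia; now apply Farey_point1.
Qed.
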